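(* Let $k,p,q$ be integers with $q>0$, $\gcd(p,q)=1$ and $kq-p$ odd, and let $Q=Q_2(L)$ be the involutory quandle with generators $a,b,c$ and defining relations $$R1: c^{ab}=c,\qquad R2: a^{(ca)^q}=b^{(ab)^{(kq-p-1)/2}},\qquad R3: a^{(ac)^q}=b^{(ab)^{(kq-p-1)/2}}.$$ Then the following relations also hold in $Q$: $c^{(ac)^{2q}}=c$; $a^{(ca)^{2q}}=a$; $b^{(cb)^{2q}}=b$; $a^{(ba)^{(kq-p-1)/2}}=b^{(bc)^q}$; $a^{(ca)^i(ba)^jc}=a^{(ca)^ic(ba)^j}$ and $a^{(ca)^i(ab)^jabc}=a^{(ca)^{i+1}(ba)^jb}$ for $0\le i\le q$ and $0\le j\le(\vert kq-p\vert-1)/2$; $c^{(ac)^ia}=c^{(ac)^ib}$ for all $i\ge 0$.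
   Context: An involutory quandle is a set with a binary operation $(x,y)\mapsto x^y$ satisfying $x^x=x$, $(x^y)^y=x$ and $(x^y)^z=(x^z)^{(y^z)}$; a presentation $\langle S\mid R\rangle_2$ denotes the involutory quandle generated by $S$ subject to $R$ and these axioms. Exponents are read left to right: $x^{yz}=(x^y)^z$, and $z^w$ for a word $w$ means successive action by its letters; negative powers are interpreted via $(xy)^{-1}=yx$ (e.g. $(ab)^{m}=(ba)^{-m}$). This presentation is the involutory quandle of $L=L(k,p/q)\cup C$, the two-bridge link built from a block of $k$ half-twists and a rational $p/q$-tangle together with an unknotted axis $C$, in the case $kq-p$ odd. *)

From mathcomp Require Import all_boot all_order all_algebra.
Set Implicit Arguments. Unset Strict Implicit. Unset Printing Implicit Defensive.
Import Order.TTheory GRing.Theory Num.Theory.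

Definition inv_quandle (T : Type) (op : T -> T -> T) : Prop :=
  [/\ (forall x, op x x = x),
      (forall x y, op (op x y) y = x) &
      (forall x y z, op (op x y) z = op (op x z) (op y z))].

(* x^w for a word w = [:: y1; ...; yn] : successive action, read left to right. *)
Definition act (T : Type) (op : T -> T -> T) (x : T) (w : seq T) : T :=
  foldl op x w.

(* Integer power of a word; negative powers use (y1...yn)^{-1} = yn...y1,
   so that e.g. (ab)^m = (ba)^{-m}. *)
Definition wpow (T : Type) (w : seq T) (m : int) : seq T :=
  match m with
  | Posz n => flatten (nseq n w)
  | Negz n => flatten (nseq n.+1 (rev w))
  end.

(* A word w acts on the quandle by x |-> x^w, every letter acts as an
   involution, and x^(y^w) = x^(rev w ++ y :: w).  By R1, c commutes with
   ab while a and b invert it, so every word in a and c conjugates (ab)^m to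
   (ab)^(+-m); in particular (ac)^(2i) and (ca)^(2i) centralize the powers of
   ab.  R2 and R3 give a^((ca)^q) = a^((ac)^q), hence a^((ca)^(2q)) = a, and
   the remaining relations follow by moving powers of ab past powers of ac,
   using that (cb)^2 and (ca)^2 act alike. *)

From mathcomp Require Import all_boot all_order all_algebra.
From Stdlib Require Import Setoid Morphisms.
Set Implicit Arguments.
Unset Strict Implicit.
Unset Printing Implicit Defensive.
Import GRing.Theory.
Local Open Scope ring_scope.

Section WordPowers.
Variables (T : Type) (w : seq T).

Lemma wpowS (n : nat) : wpow w n.+1 = w ++ wpow w n.
Proof. by []. Qed.

Lemma wpowD (m n : nat) : wpow w (m + n)%N = wpow w m ++ wpow w n.
Proof. by elim: m => [|m IHm] //; rewrite addSn !wpowS IHm catA. Qed.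

Lemma wpowSr (n : nat) : wpow w n.+1 = wpow w n ++ w.
Proof. by rewrite -addn1 wpowD /= cats0. Qed.

Lemma wpow_double (n : nat) : wpow w (n + n)%N = wpow (w ++ w) n.
Proof. by elim: n => [|n IHn] //; rewrite addSn addnS !wpowS IHn catA. Qed.

End WordPowers.

Lemma wpow_rot (T : Type) (y z : T) (n : nat) (s : seq T) :
  wpow [:: y; z] n ++ y :: s = y :: wpow [:: z; y] n ++ s.
Proof. by elim: n => [|n IHn] //; rewrite !wpowS -!catA /= IHn. Qed.

Lemma rev_wpow_nat (T : Type) (w : seq T) (n : nat) :
  rev (wpow w n) = wpow (rev w) n.
Proof. by elim: n => [|n IHn] //; rewrite wpowS rev_cat IHn -wpowSr. Qed.

Lemma wpow_rev (T : Type) (w : seq T) (m : int) :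
  wpow (rev w) m = rev (wpow w m).
Proof.
case: m => n; first by rewrite rev_wpow_nat.
exact: esym (rev_wpow_nat (rev w) n.+1).
Qed.

Lemma wpowN (T : Type) (w : seq T) (m : int) : wpow w (- m) = rev (wpow w m).
Proof.
case: m => [[|n]|n] //; first by rewrite -NegzE; exact: esym (rev_wpow_nat w n.+1).
by rewrite NegzE opprK -[RHS]/(rev (wpow (rev w) n.+1)) rev_wpow_nat revK.
Qed.

Lemma rev_wpow2 (T : Type) (y z : T) (m : int) :
  rev (wpow [:: y; z] m) = wpow [:: z; y] m.
Proof. exact: esym (wpow_rev [:: y; z] m). Qed.

Lemma wpow2N (T : Type) (y z : T) (m : int) :
  wpow [:: z; y] m = wpow [:: y; z] (- m).
Proof. by rewrite wpowN rev_wpow2. Qed.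

Section InvolutoryQuandle.
Variables (T : Type) (op : T -> T -> T).
Hypothesis quandle_op : inv_quandle op.

Lemma opxx x : op x x = x.
Proof. by case: quandle_op. Qed.

Lemma opK y : cancel (op^~ y) (op^~ y).
Proof. by case: quandle_op => _ opK _ x; apply: opK. Qed.

Lemma op_distr x y z : op (op x y) z = op (op x z) (op y z).
Proof. by case: quandle_op. Qed.

Lemma act_cat x u v : act op x (u ++ v) = act op (act op x u) v.
Proof. exact: foldl_cat. Qed.

Definition acteq (u v : seq T) := forall x, act op x u = act op x v.

#[local] Instance acteq_equiv : Equivalence acteq.
Proof. by split=> [u x | u v uv x | u v w uv vw x] //; rewrite uv ?vw. Qed.

#[local] Instance cat_acteq : Proper (acteq ==> acteq ==> acteq) (@cat T).
Proof. by move=> u u' uu' v v' vv' x; rewrite !act_cat uu' vv'. Qed.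

#[local] Instance act_acteq x : Proper (acteq ==> eq) (act op x).
Proof. by move=> u v; apply. Qed.

Lemma act_idem x w : act op x (x :: w) = act op x w.
Proof. by rewrite /act /= opxx. Qed.

Lemma acteq_cons2 y w : acteq (y :: y :: w) w.
Proof. by move=> x; rewrite /act /= opK. Qed.

Lemma acteq_cat_rev w : acteq (w ++ rev w) [::].
Proof.
elim: w => [|y w IHw] // x.
rewrite rev_cons -cats1 catA act_cat.
change (act op (act op (op x y) (w ++ rev w)) [:: y] = x).
by rewrite IHw /act /= opK.
Qed.

Lemma acteq_rev_cat w : acteq (rev w ++ w) [::].
Proof. by have := acteq_cat_rev (rev w); rewrite revK. Qed.

Lemma acteq_rev u v : acteq u v -> acteq (rev u) (rev v).
Proof.
by move=> uv; rewrite -[rev u]cats0 -(acteq_cat_rev v) -{1}uv catA acteq_rev_cat.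
Qed.

Lemma acteq_op y z : acteq [:: op y z] [:: z; y; z].
Proof. by move=> x; rewrite /act /= -[in LHS](opK z x) -op_distr. Qed.

Lemma acteq_act y w : acteq [:: act op y w] (rev w ++ y :: w).
Proof.
elim: w y => [|z w IHw] y //=.
by rewrite IHw -[op y z :: w]cat1s acteq_op rev_cons -cats1 -catA.
Qed.

Lemma act_fix_rev z w : act op z w = z -> act op z (rev w) = z.
Proof. by move=> zw; rewrite -{1}zw -act_cat acteq_cat_rev. Qed.

Lemma acteq_fix z w : act op z w = z -> acteq (z :: w) (w ++ [:: z]).
Proof. by move=> zw; rewrite -{2}zw acteq_act catA acteq_cat_rev. Qed.

Lemma op_eq_of_fix2 x y z : act op x [:: y; z] = x -> op x y = op x z.
Proof. by move=> xyz; rewrite -{2}xyz /act /= opK. Qed.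

Lemma act_fix_wpow z w m : act op z w = z -> act op z (wpow w m) = z.
Proof.
have fix_nat w' (n : nat) : act op z w' = z -> act op z (wpow w' n) = z.
  by move=> zw'; elim: n => [|n IHn] //; rewrite wpowS act_cat zw'.
by case: m => n zw; [exact: fix_nat | exact: (fix_nat _ n.+1 (act_fix_rev zw))].
Qed.

#[local] Instance wpow_acteq : Proper (acteq ==> eq ==> acteq) (@wpow T).
Proof.
have pow_nat u v (n : nat) : acteq u v -> acteq (wpow u n) (wpow v n).
  by move=> uv; elim: n => [|n IHn] //; rewrite !wpowS IHn uv.
move=> u v uv m _ <-; case: m => n; first exact: pow_nat.
exact: (pow_nat _ _ n.+1 (acteq_rev uv)).
Qed.

Lemma acteq_conj_rev u w w' :
  acteq (u ++ w) (w' ++ u) -> acteq (u ++ rev w) (rev w' ++ u).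
Proof.
move=> uw; rewrite -[u ++ rev w]cat0s -(acteq_rev_cat w') -catA.
by rewrite [w' ++ _]catA -uw -catA acteq_cat_rev cats0.
Qed.

Lemma acteq_conj_wpow u w w' m :
  acteq (u ++ w) (w' ++ u) -> acteq (u ++ wpow w m) (wpow w' m ++ u).
Proof.
have conj_nat w1 w1' (n : nat) :
    acteq (u ++ w1) (w1' ++ u) -> acteq (u ++ wpow w1 n) (wpow w1' n ++ u).
  move=> uw; elim: n => [|n IHn]; first by rewrite cats0.
  by rewrite !wpowS catA uw -catA IHn catA.
case: m => n uw; first exact: conj_nat.
exact: (conj_nat _ _ n.+1 (acteq_conj_rev uw)).
Qed.

Lemma acteq_fix_wpow z w m :
  act op z w = z -> acteq (z :: wpow w m) (wpow w m ++ [:: z]).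
Proof. by move=> zw; exact: (@acteq_conj_wpow [:: z] w w m (acteq_fix zw)). Qed.

Lemma acteq_sq_of_comm x y z :
  acteq [:: z; y; x] [:: y; x; z] -> acteq [:: z; x; z; x] [:: z; y; z; y].
Proof.
move=> zyx w; have := zyx (op (op w z) y).
by rewrite /act /= opK => <-; rewrite opK.
Qed.

Definition normalizes (w : seq T) (s : int) (u : seq T) :=
  forall m, acteq (u ++ wpow w m) (wpow w (s * m) ++ u).

Lemma normalizes_nil w : normalizes w 1 [::].
Proof. by move=> m; rewrite mul1r cats0. Qed.

Lemma normalizes_cat w s t u v :
  normalizes w s u -> normalizes w t v -> normalizes w (s * t) (u ++ v).
Proof. by move=> uN vN m; rewrite -catA vN catA uN -catA mulrA. Qed.

Lemma normalizes_wpow w s u (n : nat) :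
  normalizes w s u -> normalizes w (s ^+ n) (wpow u n).
Proof.
move=> uN; elim: n => [|n IHn]; first by rewrite expr0; exact: normalizes_nil.
by rewrite exprS wpowS; apply: normalizes_cat.
Qed.

Lemma normalizes_wpow_double w u (n : nat) :
  normalizes w (-1) u -> normalizes w 1 (wpow u (n + n)%N).
Proof.
by move=> uN; have := normalizes_wpow (n + n) uN; rewrite exprD -expr2 sqrr_sign.
Qed.

Lemma normalizes1_comm w u m :
  normalizes w 1 u -> acteq (wpow w m ++ u) (u ++ wpow w m).
Proof. by move=> uN; rewrite uN mul1r. Qed.

Lemma normalizes_fix w z : act op z w = z -> normalizes w 1 [:: z].
Proof. by move=> zw m; rewrite mul1r; apply: acteq_fix_wpow. Qed.

Lemma normalizes_head y z : normalizes [:: y; z] (-1) [:: y].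
Proof.
move=> m; rewrite mulN1r -wpow2N; apply: acteq_conj_wpow => x.
by rewrite /act /= !opK.
Qed.

Lemma normalizes_last y z : normalizes [:: y; z] (-1) [:: z].
Proof. by move=> m; rewrite mulN1r -wpow2N; apply: acteq_conj_wpow. Qed.

Section Relations.
Variables a b c : T.
Hypothesis R1 : act op c [:: a; b] = c.

Local Notation ab := (wpow [:: a; b]).

Lemma act_c_ab m : act op c (ab m) = c.
Proof. exact: act_fix_wpow. Qed.

Lemma acteq_b_ab m : acteq (b :: ab m) (ab (- m) ++ [:: b]).
Proof. by move: (normalizes_last a b m); rewrite mulN1r. Qed.

Lemma normalizes_ac : normalizes [:: a; b] (-1) [:: a; c].
Proof.
by have := normalizes_cat (normalizes_head a b) (normalizes_fix R1); rewrite mulr1.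
Qed.

Lemma normalizes_ca : normalizes [:: a; b] (-1) [:: c; a].
Proof.
by have := normalizes_cat (normalizes_fix R1) (normalizes_head a b); rewrite mul1r.
Qed.

Lemma act_c_ac_ab (i : nat) :
  act op c (wpow [:: a; c] i ++ [:: a; b]) = act op c (wpow [:: a; c] i).
Proof.
by rewrite -[[:: a; b]]/(ab 1) (normalizes_wpow i normalizes_ac 1) act_cat act_c_ab.
Qed.

Lemma act_c_ac_a (i : nat) :
  act op c (wpow [:: a; c] i ++ [:: a]) = act op c (wpow [:: a; c] i ++ [:: b]).
Proof. by rewrite !act_cat; apply: op_eq_of_fix2; rewrite -act_cat act_c_ac_ab. Qed.

Lemma act_ca_ba_c x i j :
  act op x (wpow [:: c; a] i ++ wpow [:: b; a] j ++ [:: c])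
  = act op x (wpow [:: c; a] i ++ [:: c] ++ wpow [:: b; a] j).
Proof. by rewrite -(acteq_fix_wpow _ (act_fix_rev R1 : act op c [:: b; a] = c)). Qed.

Lemma act_ca_ab_abc x (i j : nat) :
  act op x (wpow [:: c; a] i ++ ab j ++ [:: a; b; c])
  = act op x (wpow [:: c; a] i.+1 ++ wpow [:: b; a] j ++ [:: b]).
Proof.
rewrite wpowSr -catA.
have -> : [:: c; a] ++ wpow [:: b; a] j ++ [:: b]
          = c :: a :: wpow [:: b; a] j ++ [:: b] by [].
rewrite -wpow_rot -cat_cons (acteq_fix_wpow _ R1) -catA.
by rewrite (acteq_fix R1 : acteq ([:: c] ++ _) _).
Qed.

Variables (q : nat) (n : int).
Hypothesis R2 : act op a (wpow [:: c; a] q) = act op b (ab n).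
Hypothesis R3 : act op a (wpow [:: a; c] q) = act op b (ab n).

Lemma act_a_ca_ab : act op a (wpow [:: c; a] q ++ ab (- n)) = b.
Proof. by rewrite act_cat R2 -act_cat wpowN acteq_cat_rev. Qed.

Lemma act_a_ac_ab : act op a (wpow [:: a; c] q ++ ab (- n)) = b.
Proof. by rewrite act_cat R3 -act_cat wpowN acteq_cat_rev. Qed.

Lemma act_a_ca_double : act op a (wpow [:: c; a] (q + q)%N) = a.
Proof. by rewrite wpowD act_cat R2 -R3 -act_cat -(rev_wpow2 a c) acteq_cat_rev. Qed.

Lemma act_a_ac_double : act op a (wpow [:: a; c] (q + q)%N) = a.
Proof. by rewrite -(rev_wpow2 c a); apply: act_fix_rev; exact: act_a_ca_double. Qed.

Lemma act_c_ac_double : act op c (wpow [:: a; c] (q + q)%N) = c.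
Proof.
have c_conj : act op c (wpow [:: c; a] q ++ a :: wpow [:: a; c] q) = op c a.
  have c_conj_b : act op c [:: act op b (ab n)] = op c b.
    by rewrite acteq_act -wpowN act_cat act_c_ab acteq_b_ab act_cat act_c_ab.
  by rewrite -R3 acteq_act rev_wpow2 -(op_eq_of_fix2 R1) in c_conj_b.
have c_fix : act op c ((wpow [:: c; a] q ++ a :: wpow [:: a; c] q) ++ [:: a; c]) = c.
  by rewrite act_cat c_conj /act /= opK opxx.
by rewrite -[RHS]c_fix -catA cat_cons -wpowSr wpowS cat_cons acteq_cons2 cat1s
  wpow_rot act_idem -wpowD.
Qed.

Lemma acteq_cb_double (i : nat) :
  acteq (wpow [:: c; b] (i + i)%N) (wpow [:: c; a] (i + i)%N).
Proof.
have cbcb : acteq ([:: c; b] ++ [:: c; b]) ([:: c; a] ++ [:: c; a]).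
  exact: acteq_sq_of_comm (acteq_fix R1).
by rewrite !wpow_double cbcb.
Qed.

Lemma acteq_bc_double (i : nat) :
  acteq (wpow [:: b; c] (i + i)%N) (wpow [:: a; c] (i + i)%N).
Proof.
by rewrite -(rev_wpow2 c b) -(rev_wpow2 c a); apply/acteq_rev/acteq_cb_double.
Qed.

Lemma act_b_cb_double : act op b (wpow [:: c; b] (q + q)%N) = b.
Proof.
rewrite acteq_cb_double -[in LHS]act_a_ac_ab -act_cat -catA.
rewrite (normalizes1_comm _ (normalizes_wpow_double q normalizes_ca)) wpowD -catA catA.
by rewrite -(rev_wpow2 c a) acteq_rev_cat act_a_ca_ab.
Qed.

Lemma act_a_ba_of_normalizer x :
  normalizes [:: a; b] 1 x -> act op a (wpow [:: a; c] q) = act op a x ->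
  act op a (x ++ x) = a -> act op b (wpow [:: b; c] q) = act op b x ->
  act op a (wpow [:: b; a] n) = act op b (wpow [:: b; c] q).
Proof.
move=> xN ax axx ->; rewrite wpow2N -[in RHS]act_a_ac_ab -act_cat -catA act_cat ax.
by rewrite -act_cat (normalizes1_comm _ xN) catA act_cat axx.
Qed.

Lemma act_a_ba : act op a (wpow [:: b; a] n) = act op b (wpow [:: b; c] q).
Proof.
move: (odd_double_half q); rewrite -addnn; case: (odd q) => q_eq.
  (* For q = 2r + 1, the element c^((ac)^r) acts on a like (ac)^q. *)
  set r := q./2 in q_eq; pose e := act op c (wpow [:: a; c] r).
  have e_word : acteq [:: e] (c :: wpow [:: a; c] (r + r)%N).
    by rewrite acteq_act rev_wpow2 wpow_rot -wpowD.
  apply: (act_a_ba_of_normalizer (x := [:: e])).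
  - by apply: normalizes_fix; rewrite -act_cat act_c_ac_ab.
  - by rewrite e_word -q_eq add1n wpowS cat_cons act_idem.
  - exact: (acteq_cons2 e [::] a).
  - by rewrite e_word -q_eq add1n wpowS cat_cons act_idem acteq_bc_double.
apply: (act_a_ba_of_normalizer (x := wpow [:: a; c] q)) => //.
- by rewrite -q_eq add0n; apply: normalizes_wpow_double normalizes_ac.
- by rewrite -wpowD act_a_ac_double.
- by rewrite -q_eq add0n acteq_bc_double.
Qed.

End Relations.

End InvolutoryQuandle.

Theorem lemma4p3 (k p q : int) :
  0 < q -> gcdz p q = 1%N -> odd (absz (k * q - p)%R) ->
  forall (T : Type) (op : T -> T -> T) (a b c : T),
  inv_quandle op ->
  (* R1 *) act op c [:: a; b] = c ->
  (* R2 *) act op a (wpow [:: c; a] q) = act op b (wpow [:: a; b] ((k * q - p - 1) %/ 2)%Z) ->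
  (* R3 *) act op a (wpow [:: a; c] q) = act op b (wpow [:: a; b] ((k * q - p - 1) %/ 2)%Z) ->
  (act op c (wpow [:: a; c] (2 * q)) = c) /\
      (act op a (wpow [:: c; a] (2 * q)) = a) /\
      (      act op b (wpow [:: c; b] (2 * q)) = b) /\
      (      act op a (wpow [:: b; a] ((k * q - p - 1) %/ 2)%Z) = act op b (wpow [:: b; c] q)) /\
      (forall i j : nat, (i%:Z <= q) -> (j%:Z <= (`|k * q - p| - 1) %/ 2)%Z ->
         act op a (wpow [:: c; a] i%:Z ++ wpow [:: b; a] j%:Z ++ [:: c])
         = act op a (wpow [:: c; a] i%:Z ++ [:: c] ++ wpow [:: b; a] j%:Z)) /\
      (forall i j : nat, (i%:Z <= q) -> (j%:Z <= (`|k * q - p| - 1) %/ 2)%Z ->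
         act op a (wpow [:: c; a] i%:Z ++ wpow [:: a; b] j%:Z ++ [:: a; b; c])
         = act op a (wpow [:: c; a] i.+1%:Z ++ wpow [:: b; a] j%:Z ++ [:: b])) /\
      (forall i : nat,
         act op c (wpow [:: a; c] i%:Z ++ [:: a]) = act op c (wpow [:: a; c] i%:Z ++ [:: b])).
Proof.
case: q => [q|//] _ _ _ T op a b c quandle_op R1 R2 R3.
have -> : 2 * q%:Z = (q + q)%N by rewrite mulr_natl mulr2n.
split; first exact (act_c_ac_double quandle_op R1 R3).
split; first exact (act_a_ca_double quandle_op R2 R3).
split; first exact (act_b_cb_double quandle_op R1 R2 R3).
split; first exact (act_a_ba quandle_op R1 R2 R3).
split; first by move=> i j _ _; exact (act_ca_ba_c quandle_op R1 a i j).
split; first by move=> i j _ _; exact (act_ca_ab_abc quandle_op R1 a i j).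
by move=> i; exact (act_c_ac_a quandle_op R1 i).
Qed.
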